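(* Define $\varepsilon:\mathbb{N}\to(0,\infty)$ by $\varepsilon(n)=n^{-2}$ if $n=2^k$ for some $k\in\mathbb{N}$, and $\varepsilon(n)=n^{-3}$ otherwise. Then $\sum_{n\geq1}n\,\varepsilon(n)<+\infty$ and $\mathcal{U}(\varepsilon)=(0,1)\setminus\mathbb{Q}$.
   Context: For $\alpha\in(0,1)\setminus\mathbb{Q}$, let $\Delta^2$ be the closed unit bidisk, $\mathcal{P}_n$ the polynomials in $\mathbb{C}[z,w]$ of total degree at most $n$, $K=\{(e^z,e^{\alpha z}):|z|\leq1\}$, $E_n(\alpha)=\sup\{\sup_{\Delta^2}|P|:\ P\in\mathcal{P}_n,\ \sup_K|P|\leq1\}$, $e_n(\alpha)=\log E_n(\alpha)$, and $\mathcal{U}(\varepsilon)=\{\alpha\in(0,1)\setminus\mathbb{Q}:\ \limsup_{n\to\infty}\varepsilon(n)e_n(\alpha)=+\infty\}$. *)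

From Stdlib Require Import Reals Lra ZArith Classical ClassicalEpsilon.
Open Scope R_scope.

Definition C := (R * R)%type.
Definition Cadd (a b : C) : C := (fst a + fst b, snd a + snd b).
Definition Cmul (a b : C) : C :=
  (fst a * fst b - snd a * snd b, fst a * snd b + snd a * fst b).
Definition C0 : C := (0, 0).
Definition C1 : C := (1, 0).
Fixpoint Cpow (a : C) (n : nat) : C :=
  match n with O => C1 | S k => Cmul a (Cpow a k) end.
Definition Cnorm (a : C) : R := sqrt (fst a * fst a + snd a * snd a).
Definition Cscale (r : R) (a : C) : C := (r * fst a, r * snd a).
Definition Cexp (a : C) : C := (exp (fst a) * cos (snd a), exp (fst a) * sin (snd a)).
Fixpoint Csum (f : nat -> C) (n : nat) : C :=
  match n with O => C0 | S k => Cadd (Csum f k) (f k) end.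

(* A polynomial in C[z,w] is given by its coefficient array c i j (coefficient of z^i w^j). *)
Definition in_Pn (n : nat) (c : nat -> nat -> C) : Prop :=
  forall i j, (n < i + j)%nat -> c i j = C0.
Definition peval (n : nat) (c : nat -> nat -> C) (z w : C) : C :=
  Csum (fun i => Csum (fun j => Cmul (c i j) (Cmul (Cpow z i) (Cpow w j))) (S n)) (S n).

Definition in_bidisk (z w : C) : Prop := Cnorm z <= 1 /\ Cnorm w <= 1.
Definition in_K (alpha : R) (z w : C) : Prop :=
  exists u : C, Cnorm u <= 1 /\ z = Cexp u /\ w = Cexp (Cscale alpha u).

(* Extended-real supremum: Some l if the least upper bound exists, None (= +oo) otherwise. *)
Definition Esup (S : R -> Prop) : option R :=
  match excluded_middle_informative (exists l, is_lub S l) with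
  | left H => Some (proj1_sig (constructive_indefinite_description _ H))
  | right _ => None
  end.

(* E_n(alpha) = sup { sup_{Delta^2} |P| : P in P_n, sup_K |P| <= 1 }
   written as the supremum of the union of the values |P(z,w)|. *)
Definition En (alpha : R) (n : nat) : option R :=
  Esup (fun t => exists c : nat -> nat -> C,
          in_Pn n c /\
          (forall z w, in_K alpha z w -> Cnorm (peval n c z w) <= 1) /\
          exists z w, in_bidisk z w /\ t = Cnorm (peval n c z w)).

Definition en (alpha : R) (n : nat) : option R :=
  match En alpha n with Some E => Some (ln E) | None => None end.

Definition irrational (x : R) : Prop :=
  ~ exists p q : Z, q <> 0%Z /\ x = IZR p / IZR q.

Definition limsup_infty (eps : nat -> R) (alpha : R) : Prop :=
  forall (M : R) (N : nat), exists n : nat, (N <= n)%nat /\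
    match en alpha n with
    | None => True
    | Some e => eps n * e > M
    end.

Definition U (eps : nat -> R) (alpha : R) : Prop :=
  0 < alpha < 1 /\ irrational alpha /\ limsup_infty eps alpha.

Definition is_pow2 (n : nat) : Prop := exists k : nat, n = (2 ^ k)%nat.

Definition eps11 (n : nat) : R :=
  if excluded_middle_informative (is_pow2 n) then / (INR n ^ 2) else / (INR n ^ 3).

From Stdlib Require Import Reals Lra Lia List Factorial FinFun FunctionalExtensionality ClassicalEpsilon.
Open Scope R_scope.

(* For a = 2^j and n = 2a, let P have coefficients c_ij = s / w'(i + alpha j) for i, j <= a,
   where w(t) = prod_(i,j <= a) (t - i - alpha j); the nodes are distinct since alpha is
   irrational. At z = e^u, w = e^(alpha u), P is s times the divided difference of t |-> e^(t u)
   at these m + 1 = (a + 1)^2 nodes, and by the generalized Rolle theorem the real and imaginary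
   parts of that divided difference are those of u^m e^(xi u) / m! for some xi in [0, n]. For
   |u| <= 1 this is O(2^m e^n / m!), so a suitable s gives |P| <= 1 on K, while at the real point
   u = -r of the bidisk it is at least r^m e^(-n r) / m!. Taking r = 2 e^c yields
   e_n >= c a^2 - O(a e^c), whereas eps(n) = 1/(4 a^2): eps(n) e_n is unbounded along powers
   of 2. Summability holds since n eps(n) is 1/n^2 except at the powers of 2, where it is 1/n. *)

Lemma derivable_pt_lim_eq f g x l l' :
  (forall y, f y = g y) -> l = l' -> derivable_pt_lim f x l -> derivable_pt_lim g x l'.
Proof.
  intros Hfg <- Hf. replace g with f by (apply functional_extensionality; exact Hfg). exact Hf.
Qed.

Lemma derivable_pt_lim_add f g x a b : derivable_pt_lim f x a -> derivable_pt_lim g x b ->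
  derivable_pt_lim (fun y => f y + g y) x (a + b).
Proof. exact (derivable_pt_lim_plus f g x a b). Qed.

Lemma derivable_pt_lim_sub f g x a b : derivable_pt_lim f x a -> derivable_pt_lim g x b ->
  derivable_pt_lim (fun y => f y - g y) x (a - b).
Proof. exact (derivable_pt_lim_minus f g x a b). Qed.

Lemma derivable_pt_lim_mul f g x a b : derivable_pt_lim f x a -> derivable_pt_lim g x b ->
  derivable_pt_lim (fun y => f y * g y) x (a * g x + f x * b).
Proof. exact (derivable_pt_lim_mult f g x a b). Qed.

Lemma derivable_pt_lim_scal c f x a : derivable_pt_lim f x a ->
  derivable_pt_lim (fun y => c * f y) x (c * a).
Proof.
  intros Hf. eapply derivable_pt_lim_eq; [intro; reflexivity| |].
  2: exact (derivable_pt_lim_mul _ _ x _ _ (derivable_pt_lim_const c x) Hf).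
  unfold fct_cte. ring.
Qed.

Lemma derivable_pt_lim_comp_lin g c x l : derivable_pt_lim g (x * c) l ->
  derivable_pt_lim (fun y => g (y * c)) x (l * c).
Proof.
  intros Hg. apply (derivable_pt_lim_comp (fun y => y * c) g x c l); [|exact Hg].
  eapply derivable_pt_lim_eq; [intro; reflexivity| |].
  2: exact (derivable_pt_lim_mul _ _ x _ _ (derivable_pt_lim_id x) (derivable_pt_lim_const c x)).
  unfold fct_cte. ring.
Qed.

Lemma Rolle_deriv F F' a b : (forall x, derivable_pt_lim F x (F' x)) -> a < b ->
  F a = 0 -> F b = 0 -> exists c, a < c < b /\ F' c = 0.
Proof.
  intros HD Hab Ha Hb.
  pose (pr := fun x (_ : a < x < b) => exist _ (F' x) (HD x) : derivable_pt F x).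
  destruct (Rolle F a b pr) as [c [Hc Hc0]].
  - intros x _. apply derivable_continuous_pt. exists (F' x). apply HD.
  - exact Hab.
  - congruence.
  - exists c. split; [exact Hc|]. rewrite <- Hc0. symmetry. apply derive_pt_eq_0. apply HD.
Qed.

Lemma list_max_exists (l : list R) : l <> nil -> exists x, In x l /\ forall y, In y l -> y <= x.
Proof.
  induction l as [|a l IH]; intros Hl; [congruence|].
  destruct l as [|b l].
  - exists a. split; [left; reflexivity|]. intros y [->|[]]. lra.
  - destruct IH as [x [Hx Hmax]]; [discriminate|].
    destruct (Rle_dec a x).
    + exists x. split; [right; exact Hx|]. intros y [<-|Hy]; auto.
    + exists a. split; [left; reflexivity|].
      intros y [<-|Hy]; [lra|]. specialize (Hmax y Hy); lra.
Qed.

Lemma derivative_zeros F F' (HD : forall x, derivable_pt_lim F x (F' x)) :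
  forall k (l : list R) a b, length l = S k -> NoDup l ->
  (forall x, In x l -> a <= x <= b /\ F x = 0) ->
  exists l', NoDup l' /\ length l' = k /\ (forall x, In x l' -> a <= x <= b /\ F' x = 0).
Proof.
  induction k as [|k IH]; intros l a b Hlen Hnd Hz.
  { exists nil. split; [constructor|split; [reflexivity|intros x []]]. }
  (* Remove the largest zero x0; the largest remaining zero y and x0 give one more zero of F'
     beyond those found by induction on [a, y]. *)
  destruct (list_max_exists l) as [x0 [Hx0 Hmax]]; [intros ->; discriminate|].
  destruct (in_split x0 l Hx0) as [l1 [l2 ->]].
  assert (Hnd0 := NoDup_remove_1 _ _ _ Hnd).
  assert (Hx0_out := NoDup_remove_2 _ _ _ Hnd).
  assert (Hin : forall z, In z (l1 ++ l2) -> In z (l1 ++ x0 :: l2)).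
  { intros z Hz0. apply in_app_or in Hz0. apply in_or_app. simpl. tauto. }
  assert (Hlen0 : length (l1 ++ l2) = S k).
  { rewrite length_app in *. simpl in Hlen. lia. }
  destruct (list_max_exists (l1 ++ l2)) as [y [Hy Hymax]].
  { intros Hnil. rewrite Hnil in Hlen0. discriminate. }
  assert (Hyx0 : y < x0).
  { assert (y <= x0) by exact (Hmax y (Hin y Hy)).
    destruct (Req_dec y x0) as [->|]; [contradiction|lra]. }
  destruct (IH (l1 ++ l2) a y Hlen0 Hnd0) as [l' [Hnd' [Hlen' Hz']]].
  { intros z Hz0. destruct (Hz z (Hin z Hz0)). split; [split; [lra|exact (Hymax z Hz0)]|assumption]. }
  destruct (Rolle_deriv F F' y x0 HD Hyx0) as [c [Hc Hc0]].
  { exact (proj2 (Hz y (Hin y Hy))). }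
  { exact (proj2 (Hz x0 Hx0)). }
  destruct (Hz y (Hin y Hy)) as [[Hay _] _]. destruct (Hz x0 Hx0) as [[_ Hx0b] _].
  exists (c :: l'). split; [|split].
  - constructor; [|assumption]. intros Hc'. destruct (Hz' c Hc'). lra.
  - simpl. lia.
  - intros z [<-|Hz0]; [split; [lra|assumption]|].
    destruct (Hz' z Hz0) as [[? ?] ?]. split; [lra|assumption].
Qed.

Definition deriv_chain (D : nat -> R -> R) : Prop :=
  forall s t, derivable_pt_lim (D s) t (D (S s) t).

Lemma higher_derivative_zero D (HD : deriv_chain D) :
  forall k j (l : list R) a b, length l = S k -> NoDup l ->
  (forall x, In x l -> a <= x <= b /\ D j x = 0) ->
  exists xi, a <= xi <= b /\ D (j + k)%nat xi = 0.
Proof.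
  induction k as [|k IH]; intros j l a b Hlen Hnd Hz.
  - destruct l as [|x l]; [discriminate|]. exists x. rewrite Nat.add_0_r. apply Hz. left; reflexivity.
  - destruct (derivative_zeros (D j) (D (S j)) (HD j) (S k) l a b Hlen Hnd Hz)
      as [l' [Hnd' [Hlen' Hz']]].
    destruct (IH (S j) l' a b Hlen' Hnd' Hz') as [xi Hxi]. exists xi.
    replace (j + S k)%nat with (S j + k)%nat by lia. exact Hxi.
Qed.

(* [prod_deriv l s] is the [s]-th derivative of [t |-> prod_(y in l) (t - y)], by Leibniz's rule. *)
Fixpoint prod_deriv (l : list R) (s : nat) (t : R) : R :=
  match l with
  | nil => match s with O => 1 | S _ => 0 end
  | y :: l' => (t - y) * prod_deriv l' s t + INR s * prod_deriv l' (pred s) t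
  end.

Lemma prod_deriv_chain l : deriv_chain (prod_deriv l).
Proof.
  induction l as [|y l IH]; intros s t; simpl.
  - destruct s; apply derivable_pt_lim_const.
  - eapply derivable_pt_lim_eq; [intro; reflexivity| |].
    2:{ apply derivable_pt_lim_add; apply derivable_pt_lim_mul; try apply IH.
        - apply derivable_pt_lim_sub; [apply derivable_pt_lim_id|apply derivable_pt_lim_const].
        - apply derivable_pt_lim_const. }
    destruct s as [|s]; simpl pred; rewrite ?S_INR; unfold fct_cte, id; simpl INR; ring.
Qed.

Lemma prod_deriv_above l s t : (length l < s)%nat -> prod_deriv l s t = 0.
Proof.
  revert s. induction l as [|y l IH]; intros s Hs; simpl in *.
  - destruct s; [lia|reflexivity].
  - rewrite !IH by lia. ring.
Qed.

Lemma prod_deriv_top l t : prod_deriv l (length l) t = INR (fact (length l)).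
Proof.
  induction l as [|y l IH]; [reflexivity|]. cbn [prod_deriv length pred].
  rewrite prod_deriv_above, IH by lia.
  change (fact (S (length l))) with (S (length l) * fact (length l))%nat.
  rewrite mult_INR, S_INR. ring.
Qed.

Lemma prod_deriv_root l z : In z l -> prod_deriv l 0 z = 0.
Proof.
  induction l as [|y l IH]; intros Hz; simpl in *; [contradiction|].
  destruct Hz as [<-|Hz]; [|rewrite IH by exact Hz]; ring.
Qed.

Lemma prod_deriv_nonroot l x : ~ In x l -> prod_deriv l 0 x <> 0.
Proof.
  induction l as [|y l IH]; intros Hx; simpl; [lra|].
  rewrite Rmult_0_l, Rplus_0_r. apply Rmult_integral_contrapositive. split.
  - intros Hxy. apply Hx. left. lra.
  - apply IH. intros H. apply Hx. right. exact H.
Qed.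

Lemma length_remove_NoDup (l : list R) x : NoDup l -> In x l ->
  length (remove Req_EM_T x l) = pred (length l).
Proof.
  induction l as [|y l IH]; intros Hnd Hx; simpl in *; [contradiction|].
  inversion Hnd as [|? ? Hy Hnd']; subst.
  destruct (Req_EM_T x y) as [<-|Hxy].
  - rewrite notin_remove by exact Hy. reflexivity.
  - destruct Hx as [->|Hx]; [congruence|]. simpl. rewrite IH by assumption.
    destruct l; [contradiction|reflexivity].
Qed.

Definition sumR {A} (F : A -> R) (l : list A) : R := fold_right (fun a acc => F a + acc) 0 l.

Lemma sumR_ext_in {A} (F G : A -> R) l : (forall x, In x l -> F x = G x) -> sumR F l = sumR G l.
Proof.
  induction l as [|a l IH]; intros H; simpl; [reflexivity|].
  rewrite H, IH; [reflexivity|intros x Hx; apply H; now right|now left].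
Qed.

Lemma sumR_scal {A} (F : A -> R) c l : sumR (fun x => c * F x) l = c * sumR F l.
Proof. induction l as [|a l IH]; simpl; [|rewrite IH]; ring. Qed.

Lemma sumR_zero {A} (F : A -> R) l : (forall x, In x l -> F x = 0) -> sumR F l = 0.
Proof.
  induction l as [|a l IH]; intros H; simpl; [reflexivity|].
  rewrite H, IH; [ring|intros x Hx; apply H; now right|now left].
Qed.

Lemma sumR_app {A} (F : A -> R) l1 l2 : sumR F (l1 ++ l2) = sumR F l1 + sumR F l2.
Proof. induction l1 as [|a l1 IH]; simpl; [|rewrite IH]; ring. Qed.

Lemma sumR_map {A B} (F : B -> R) (f : A -> B) l : sumR F (map f l) = sumR (fun x => F (f x)) l.
Proof. induction l as [|a l IH]; simpl; [|rewrite IH]; reflexivity. Qed.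

Lemma sumR_prod {A B} (h : A * B -> R) l1 l2 :
  sumR h (list_prod l1 l2) = sumR (fun i => sumR (fun j => h (i, j)) l2) l1.
Proof. induction l1 as [|a l1 IH]; simpl; [|rewrite sumR_app, sumR_map, IH]; reflexivity. Qed.

Lemma sumR_single (F : R -> R) l z : NoDup l -> In z l ->
  (forall x, In x l -> x <> z -> F x = 0) -> sumR F l = F z.
Proof.
  induction l as [|y l IH]; intros Hnd Hz H; simpl in *; [contradiction|].
  inversion Hnd as [|? ? Hy Hnd']; subst.
  destruct (Req_dec y z) as [->|Hyz].
  - rewrite sumR_zero; [ring|]. intros x Hx. apply H; [now right|]. intros ->. contradiction.
  - destruct Hz as [->|Hz]; [congruence|]. rewrite H, IH by auto. ring.
Qed.

Lemma sumR_deriv {A} (G : A -> R -> R) (G' : A -> R) l t :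
  (forall x, derivable_pt_lim (G x) t (G' x)) ->
  derivable_pt_lim (fun t => sumR (fun x => G x t) l) t (sumR G' l).
Proof.
  intros HG. induction l as [|a l IH]; simpl.
  - apply derivable_pt_lim_const.
  - exact (derivable_pt_lim_add _ _ t _ _ (HG a) IH).
Qed.

(* The denominator [prod_(y in L, y <> x) (x - y)] is [w'(x)] for [w(t) = prod_(y in L) (t - y)]. *)
Definition divided_difference (F : R -> R) (L : list R) : R :=
  sumR (fun x => F x / prod_deriv (remove Req_EM_T x L) 0 x) L.

(* Subtracting the Lagrange interpolant of F at the nodes leaves a function vanishing at all
   nodes; its derivative of order |L|-1 has a zero, where the interpolant contributes
   (|L|-1)! times the divided difference. *)
Theorem divided_difference_mean_value D F L a b :
  deriv_chain D -> (forall t, D O t = F t) ->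
  NoDup L -> L <> nil -> (forall x, In x L -> a <= x <= b) ->
  exists xi, a <= xi <= b /\
    D (pred (length L)) xi = INR (fact (pred (length L))) * divided_difference F L.
Proof.
  intros HD HF Hnd Hne Hab.
  set (m := pred (length L)).
  set (ell := fun x => prod_deriv (remove Req_EM_T x L)).
  set (H := fun s t => D s t - sumR (fun x => F x / ell x 0%nat x * ell x s t) L).
  assert (HH : deriv_chain H).
  { intros s t. apply derivable_pt_lim_sub; [apply HD|].
    apply sumR_deriv. intros x. apply derivable_pt_lim_scal, prod_deriv_chain. }
  assert (Hlen : length L = S m) by (unfold m; destruct L; [congruence|reflexivity]).
  destruct (higher_derivative_zero H HH m 0 L a b Hlen Hnd) as [xi [Hxi Hzero]].
  - intros z Hz. split; [exact (Hab z Hz)|]. unfold H. rewrite HF.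
    rewrite (sumR_single _ L z Hnd Hz).
    + field. apply prod_deriv_nonroot, remove_In.
    + intros x Hx Hxz. unfold ell. rewrite (prod_deriv_root _ z); [ring|].
      apply in_in_remove; [congruence|exact Hz].
  - exists xi. split; [exact Hxi|]. unfold H in Hzero. simpl in Hzero.
    rewrite (sumR_ext_in _ (fun x => INR (fact m) * (F x / ell x 0%nat x))) in Hzero.
    + rewrite sumR_scal in Hzero. unfold divided_difference. unfold ell in Hzero. lra.
    + intros x Hx. unfold ell.
      replace m with (length (remove Req_EM_T x L)) by (apply length_remove_NoDup; assumption).
      rewrite prod_deriv_top. ring.
Qed.

Lemma exp_le x y : x <= y -> exp x <= exp y.
Proof. intros [Hxy|Hxy]; [left; apply exp_increasing, Hxy|right; rewrite Hxy; reflexivity]. Qed.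

Definition norm1 (p : C) : R := Rabs (fst p) + Rabs (snd p).

Lemma norm1_nonneg p : 0 <= norm1 p.
Proof. unfold norm1. pose proof (Rabs_pos (fst p)). pose proof (Rabs_pos (snd p)). lra. Qed.

Lemma Rabs_fst_le_norm1 p : Rabs (fst p) <= norm1 p.
Proof. unfold norm1. pose proof (Rabs_pos (snd p)). lra. Qed.

Lemma Rabs_snd_le_norm1 p : Rabs (snd p) <= norm1 p.
Proof. unfold norm1. pose proof (Rabs_pos (fst p)). lra. Qed.

Lemma Cnorm_le_norm1 p : Cnorm p <= norm1 p.
Proof.
  destruct p as [a b]. unfold Cnorm, norm1; simpl.
  pose proof (Rabs_pos a). pose proof (Rabs_pos b).
  rewrite <- (sqrt_Rsqr (Rabs a + Rabs b)) by lra.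
  apply sqrt_le_1_alt. unfold Rsqr.
  pose proof (pow2_abs a). pose proof (pow2_abs b). simpl in *. nra.
Qed.

Lemma Rabs_fst_le_Cnorm p : Rabs (fst p) <= Cnorm p.
Proof.
  destruct p as [a b]. unfold Cnorm; simpl.
  rewrite <- sqrt_Rsqr_abs. apply sqrt_le_1_alt. unfold Rsqr. nra.
Qed.

Lemma Cnorm_le_1_components u : Cnorm u <= 1 -> Rabs (fst u) <= 1 /\ Rabs (snd u) <= 1.
Proof.
  destruct u as [a b]. unfold Cnorm; simpl. intros Hu.
  assert (Hsq : a * a + b * b <= 1).
  { rewrite <- (sqrt_sqrt (a * a + b * b)) by nra. pose proof (sqrt_pos (a * a + b * b)). nra. }
  split; apply Rabs_le; nra.
Qed.

Lemma norm1_Cmul p q : norm1 (Cmul p q) <= norm1 p * norm1 q.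
Proof.
  destruct p as [a b], q as [c d]. unfold norm1, Cmul; simpl.
  unfold Rminus. pose proof (Rabs_triang (a * c) (- (b * d))).
  pose proof (Rabs_triang (a * d) (b * c)).
  rewrite Rabs_Ropp in *. rewrite !Rabs_mult in *.
  pose proof (Rabs_pos a). pose proof (Rabs_pos b). pose proof (Rabs_pos c). pose proof (Rabs_pos d).
  nra.
Qed.

Lemma norm1_Cpow u s : norm1 (Cpow u s) <= norm1 u ^ s.
Proof.
  induction s as [|s IH]; simpl.
  - unfold norm1, C1; simpl. rewrite Rabs_R1, Rabs_R0. lra.
  - eapply Rle_trans; [apply norm1_Cmul|].
    apply Rmult_le_compat_l; [apply norm1_nonneg|exact IH].
Qed.

Lemma norm1_Cexp v : norm1 (Cexp v) <= 2 * exp (fst v).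
Proof.
  unfold norm1, Cexp; simpl. pose proof (exp_pos (fst v)).
  rewrite !Rabs_mult, Rabs_pos_eq by lra.
  pose proof (COS_bound (snd v)). pose proof (SIN_bound (snd v)).
  assert (Rabs (cos (snd v)) <= 1) by (apply Rabs_le; lra).
  assert (Rabs (sin (snd v)) <= 1) by (apply Rabs_le; lra).
  nra.
Qed.

Lemma Cmul_Cexp v1 v2 : Cmul (Cexp v1) (Cexp v2) = Cexp (Cadd v1 v2).
Proof.
  destruct v1 as [a b], v2 as [c d]. unfold Cmul, Cexp, Cadd; simpl.
  rewrite exp_plus, cos_plus, sin_plus. f_equal; ring.
Qed.

Lemma Cpow_Cexp v i : Cpow (Cexp v) i = Cexp (Cscale (INR i) v).
Proof.
  destruct v as [a b]. induction i as [|i IH].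
  - unfold Cexp, Cscale; simpl. rewrite !Rmult_0_l, exp_0, cos_0, sin_0. unfold C1. f_equal; ring.
  - simpl Cpow. rewrite IH, Cmul_Cexp, S_INR. unfold Cadd, Cscale; simpl. f_equal; f_equal; ring.
Qed.

(* [exp_tower u s t] is the [s]-th derivative of [t |-> e^(t u)]. *)
Definition exp_tower (u : C) (s : nat) (t : R) : C := Cmul (Cpow u s) (Cexp (Cscale t u)).

Lemma exp_tower_0 u t : exp_tower u 0 t = Cexp (Cscale t u).
Proof. destruct u as [a b]. unfold exp_tower, Cmul, Cexp, Cscale, C1; simpl. f_equal; ring. Qed.

Lemma exp_tower_deriv u :
  deriv_chain (fun s t => fst (exp_tower u s t)) /\ deriv_chain (fun s t => snd (exp_tower u s t)).
Proof.
  destruct u as [a b].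
  assert (Hc : forall t, derivable_pt_lim (fun t => exp (t * a) * cos (t * b)) t
                 (exp (t * a) * a * cos (t * b) + exp (t * a) * (- sin (t * b) * b))).
  { intros t. apply (derivable_pt_lim_mul (fun t => exp (t * a)) (fun t => cos (t * b)));
      apply derivable_pt_lim_comp_lin; [apply derivable_pt_lim_exp|apply derivable_pt_lim_cos]. }
  assert (Hs : forall t, derivable_pt_lim (fun t => exp (t * a) * sin (t * b)) t
                 (exp (t * a) * a * sin (t * b) + exp (t * a) * (cos (t * b) * b))).
  { intros t. apply (derivable_pt_lim_mul (fun t => exp (t * a)) (fun t => sin (t * b)));
      apply derivable_pt_lim_comp_lin; [apply derivable_pt_lim_exp|apply derivable_pt_lim_sin]. }
  split; intros s t; set (A := fst (Cpow (a, b) s)); set (B := snd (Cpow (a, b) s)).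
  - eapply (derivable_pt_lim_eq
      (fun t => A * (exp (t * a) * cos (t * b)) - B * (exp (t * a) * sin (t * b)))).
    3: apply derivable_pt_lim_sub; apply derivable_pt_lim_scal; [apply Hc|apply Hs].
    all: intros; unfold exp_tower, Cmul, Cexp, Cscale, A, B; simpl; ring.
  - eapply (derivable_pt_lim_eq
      (fun t => A * (exp (t * a) * sin (t * b)) + B * (exp (t * a) * cos (t * b)))).
    3: apply derivable_pt_lim_add; apply derivable_pt_lim_scal; [apply Hs|apply Hc].
    all: intros; unfold exp_tower, Cmul, Cexp, Cscale, A, B; simpl; ring.
Qed.

Lemma exp_tower_norm1 u s t N : Cnorm u <= 1 -> 0 <= t <= N ->
  norm1 (exp_tower u s t) <= 2 ^ S s * exp N.
Proof.
  intros Hu Ht. destruct (Cnorm_le_1_components u Hu) as [Ha Hb].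
  assert (Hu1 : norm1 u <= 2) by (unfold norm1; lra).
  assert (Hpow : norm1 (Cpow u s) <= 2 ^ s).
  { eapply Rle_trans; [apply norm1_Cpow|]. apply pow_incr. split; [apply norm1_nonneg|exact Hu1]. }
  assert (Hexp : exp (t * fst u) <= exp N).
  { apply exp_le. pose proof (Rle_abs (t * fst u)).
    rewrite Rabs_mult, Rabs_pos_eq in * by lra. nra. }
  eapply Rle_trans; [apply norm1_Cmul|].
  eapply Rle_trans.
  { apply Rmult_le_compat; [apply norm1_nonneg|apply norm1_nonneg|exact Hpow|apply norm1_Cexp]. }
  simpl fst. pose proof (pow_lt 2 s ltac:(lra)). simpl pow. nra.
Qed.

Lemma exp_tower_real r s t : exp_tower (r, 0) s t = (r ^ s * exp (t * r), 0).
Proof.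
  assert (Hpow : Cpow (r, 0) s = (r ^ s, 0)).
  { induction s as [|s IH]; [reflexivity|]. simpl. rewrite IH. unfold Cmul; simpl. f_equal; ring. }
  unfold exp_tower. rewrite Hpow. unfold Cmul, Cexp, Cscale; simpl.
  rewrite Rmult_0_r, cos_0, sin_0. f_equal; ring.
Qed.

Lemma exp_dd_upper (proj : C -> R) u L N :
  deriv_chain (fun s t => proj (exp_tower u s t)) -> (forall p, Rabs (proj p) <= norm1 p) ->
  Cnorm u <= 1 -> NoDup L -> L <> nil -> (forall x, In x L -> 0 <= x <= N) ->
  INR (fact (pred (length L))) * Rabs (divided_difference (fun t => proj (Cexp (Cscale t u))) L)
    <= 2 ^ S (pred (length L)) * exp N.
Proof.
  intros HD Hproj Hu Hnd Hne HL.
  destruct (divided_difference_mean_value _ _ L 0 N HD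
              (fun t => f_equal proj (exp_tower_0 u t)) Hnd Hne HL) as [xi [Hxi Hmv]].
  rewrite <- (Rabs_pos_eq (INR (fact _))) by apply pos_INR.
  rewrite <- Rabs_mult, <- Hmv.
  eapply Rle_trans; [apply Hproj|apply exp_tower_norm1; assumption].
Qed.

Lemma exp_dd_lower r L N : 0 <= r -> NoDup L -> L <> nil -> (forall x, In x L -> 0 <= x <= N) ->
  r ^ pred (length L) * exp (- N * r) <=
  INR (fact (pred (length L))) * Rabs (divided_difference (fun t => fst (Cexp (Cscale t (- r, 0)))) L).
Proof.
  intros Hr Hnd Hne HL.
  destruct (divided_difference_mean_value _ _ L 0 N (proj1 (exp_tower_deriv (- r, 0)))
              (fun t => f_equal fst (exp_tower_0 (- r, 0) t)) Hnd Hne HL) as [xi [Hxi Hmv]].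
  rewrite <- (Rabs_pos_eq (INR (fact _))) by apply pos_INR.
  rewrite <- Rabs_mult, <- Hmv, exp_tower_real. simpl fst.
  rewrite Rabs_mult, Rabs_pos_eq with (x := exp _) by (left; apply exp_pos).
  rewrite <- RPow_abs, Rabs_Ropp, Rabs_pos_eq by exact Hr.
  apply Rmult_le_compat_l; [apply pow_le, Hr|]. apply exp_le. nra.
Qed.

Definition node (alpha : R) (ij : nat * nat) : R := INR (fst ij) + alpha * INR (snd ij).
Definition grid (a : nat) : list (nat * nat) := list_prod (seq 0 (S a)) (seq 0 (S a)).
Definition nodes (alpha : R) (a : nat) : list R := map (node alpha) (grid a).

Lemma node_injective alpha : irrational alpha -> Injective (node alpha).
Proof.
  intros Hirr [i j] [i' j'] Heq. unfold node in Heq; simpl in Heq.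
  destruct (Nat.eq_dec j j') as [<-|Hj].
  - f_equal. apply INR_eq. lra.
  - exfalso. apply Hirr. exists (Z.of_nat i - Z.of_nat i')%Z, (Z.of_nat j' - Z.of_nat j)%Z.
    split; [lia|]. rewrite !minus_IZR, <- !INR_IZR_INZ.
    assert (INR j' - INR j <> 0) by (intros H; apply Hj, INR_eq; lra).
    field_simplify_eq; [lra|assumption].
Qed.

Lemma NoDup_list_prod {A B} (l1 : list A) (l2 : list B) :
  NoDup l1 -> NoDup l2 -> NoDup (list_prod l1 l2).
Proof.
  induction l1 as [|x l1 IH]; intros H1 H2; simpl; [constructor|].
  inversion H1 as [|? ? Hx H1']; subst. apply NoDup_app.
  - apply Injective_map_NoDup; [intros y1 y2 H; congruence|exact H2].
  - exact (IH H1' H2).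
  - intros p Hp Hp'. apply in_map_iff in Hp as [y [<- _]]. apply in_prod_iff in Hp'. tauto.
Qed.

Lemma nodes_NoDup alpha a : irrational alpha -> NoDup (nodes alpha a).
Proof.
  intros Hirr. apply Injective_map_NoDup; [exact (node_injective alpha Hirr)|].
  apply NoDup_list_prod; apply seq_NoDup.
Qed.

Lemma nodes_length alpha a : length (nodes alpha a) = (S a * S a)%nat.
Proof. unfold nodes, grid. rewrite length_map, length_prod, length_seq. reflexivity. Qed.

Lemma nodes_not_nil alpha a : nodes alpha a <> nil.
Proof. intros Hnil. pose proof (nodes_length alpha a) as Hl. rewrite Hnil in Hl. discriminate. Qed.

Lemma nodes_bounds alpha a : 0 <= alpha <= 1 -> forall x, In x (nodes alpha a) -> 0 <= x <= INR (2 * a).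
Proof.
  intros Hal x Hx. unfold nodes, grid in Hx. apply in_map_iff in Hx as [[i j] [<- Hij]].
  apply in_prod_iff in Hij as [Hi Hj]. apply in_seq in Hi, Hj.
  assert (INR i <= INR a) by (apply le_INR; lia). assert (INR j <= INR a) by (apply le_INR; lia).
  pose proof (pos_INR i). pose proof (pos_INR j).
  unfold node; simpl fst; simpl snd. rewrite mult_INR. simpl (INR 2). split; nra.
Qed.

Definition node_weight (alpha : R) (a : nat) (scale : R) (i j : nat) : R :=
  if andb (Nat.leb i a) (Nat.leb j a)
  then scale / prod_deriv (remove Req_EM_T (node alpha (i, j)) (nodes alpha a)) 0 (node alpha (i, j))
  else 0.

(* On [K], i.e. at [z = e^u, w = e^(alpha u)], this polynomial equals [scale] times the divided
   difference of [t |-> e^(t u)] at the nodes [i + alpha j], [i, j <= a]. *)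
Definition dd_poly (alpha : R) (a : nat) (scale : R) (i j : nat) : C :=
  (node_weight alpha a scale i j, 0).

Lemma dd_poly_in_Pn alpha a scale : in_Pn (2 * a) (dd_poly alpha a scale).
Proof.
  intros i j Hij. unfold dd_poly, node_weight.
  destruct (Nat.leb_spec i a), (Nat.leb_spec j a); simpl; try reflexivity. lia.
Qed.

Lemma sumR_seq_cut a (h : nat -> R) : (forall k, (a < k)%nat -> h k = 0) ->
  sumR h (seq 0 (S (2 * a))) = sumR h (seq 0 (S a)).
Proof.
  intros H. replace (S (2 * a)) with (S a + a)%nat by lia.
  rewrite seq_app, sumR_app, (sumR_zero h (seq (0 + S a) a)); [ring|].
  intros k Hk. apply in_seq in Hk. apply H. lia.
Qed.

Lemma weighted_grid_sum alpha a scale (g : R -> R) :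
  sumR (fun i => sumR (fun j => node_weight alpha a scale i j * g (node alpha (i, j)))
    (seq 0 (S (2 * a)))) (seq 0 (S (2 * a)))
  = scale * divided_difference g (nodes alpha a).
Proof.
  unfold divided_difference. unfold nodes at 2. rewrite sumR_map. unfold grid. rewrite sumR_prod.
  rewrite sumR_seq_cut.
  2:{ intros k Hk. apply sumR_zero. intros j _. unfold node_weight.
      destruct (Nat.leb_spec k a); [lia|]. simpl. ring. }
  rewrite <- sumR_scal. apply sumR_ext_in. intros i Hi. apply in_seq in Hi.
  rewrite sumR_seq_cut.
  2:{ intros k Hk. unfold node_weight.
      destruct (Nat.leb_spec k a); [lia|]. rewrite Bool.andb_false_r. ring. }
  rewrite <- sumR_scal. apply sumR_ext_in. intros j Hj. apply in_seq in Hj.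
  unfold node_weight. destruct (Nat.leb_spec i a), (Nat.leb_spec j a); try lia. simpl.
  unfold Rdiv. ring.
Qed.

Section Projection.

Variable proj : C -> R.
Hypothesis proj_add : forall p q, proj (Cadd p q) = proj p + proj q.
Hypothesis proj_0 : proj C0 = 0.
Hypothesis proj_real_mul : forall r p, proj (Cmul (r, 0) p) = r * proj p.

Lemma proj_Csum f n : proj (Csum f n) = sumR (fun i => proj (f i)) (seq 0 n).
Proof.
  induction n as [|n IH]; [exact proj_0|].
  cbn [Csum]. rewrite seq_S, sumR_app, proj_add, IH. simpl. ring.
Qed.

Lemma peval_dd_poly alpha a scale u :
  proj (peval (2 * a) (dd_poly alpha a scale) (Cexp u) (Cexp (Cscale alpha u)))
  = scale * divided_difference (fun t => proj (Cexp (Cscale t u))) (nodes alpha a).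
Proof.
  rewrite <- weighted_grid_sum. unfold peval. rewrite proj_Csum.
  apply sumR_ext_in. intros i _. rewrite proj_Csum. apply sumR_ext_in. intros j _.
  rewrite !Cpow_Cexp, Cmul_Cexp. unfold dd_poly. rewrite proj_real_mul.
  do 3 f_equal. destruct u as [x y]. unfold Cadd, Cscale, node; simpl. f_equal; ring.
Qed.

End Projection.

Lemma Cnorm_Cexp v : Cnorm (Cexp v) = exp (fst v).
Proof.
  unfold Cnorm, Cexp; simpl. pose proof (exp_pos (fst v)).
  replace (exp (fst v) * cos (snd v) * (exp (fst v) * cos (snd v)) +
           exp (fst v) * sin (snd v) * (exp (fst v) * sin (snd v)))
    with (Rsqr (exp (fst v)) * (Rsqr (sin (snd v)) + Rsqr (cos (snd v)))) by (unfold Rsqr; ring).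
  rewrite sin2_cos2, Rmult_1_r. apply sqrt_Rsqr. lra.
Qed.

(* Chosen so that the real and imaginary parts of the polynomial are at most 1/2 on [K]. *)
Definition dd_scale (a : nat) : R :=
  INR (fact (pred (S a * S a))) / (2 ^ S (S (pred (S a * S a))) * exp (INR (2 * a))).

Lemma Rabs_dd_scale_le_half a d : INR (fact (pred (S a * S a))) * Rabs d <=
    2 ^ S (pred (S a * S a)) * exp (INR (2 * a)) ->
  Rabs (dd_scale a * d) <= / 2.
Proof.
  unfold dd_scale. set (m := pred (S a * S a)). set (E := exp (INR (2 * a))). intros Hd.
  assert (Hfact : 0 < INR (fact m)) by apply INR_fact_lt_0.
  assert (HE : 0 < E) by apply exp_pos.
  assert (Hpow : 0 < 2 ^ m) by (apply pow_lt; lra).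
  rewrite Rabs_mult, Rabs_pos_eq.
  2:{ apply Rlt_le, Rdiv_lt_0_compat; [lra|simpl; nra]. }
  apply Rmult_le_reg_l with (2 ^ S (S m) * E); [simpl; nra|].
  unfold Rdiv. field_simplify; [|simpl; nra]. simpl pow in *. nra.
Qed.

Lemma dd_poly_bounded_on_K alpha a : 0 < alpha < 1 -> irrational alpha ->
  forall z w, in_K alpha z w -> Cnorm (peval (2 * a) (dd_poly alpha a (dd_scale a)) z w) <= 1.
Proof.
  intros Hal Hirr z w [u [Hu [-> ->]]].
  assert (HL := nodes_NoDup alpha a Hirr).
  assert (Hne := nodes_not_nil alpha a).
  assert (Hb := nodes_bounds alpha a ltac:(lra)).
  destruct (exp_tower_deriv u) as [Hre Him].
  assert (Hfst := exp_dd_upper fst u _ _ Hre Rabs_fst_le_norm1 Hu HL Hne Hb).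
  assert (Hsnd := exp_dd_upper snd u _ _ Him Rabs_snd_le_norm1 Hu HL Hne Hb).
  rewrite nodes_length in Hfst, Hsnd.
  eapply Rle_trans; [apply Cnorm_le_norm1|]. unfold norm1.
  rewrite (peval_dd_poly fst), (peval_dd_poly snd); try (intros; simpl; ring); try reflexivity.
  pose proof (Rabs_dd_scale_le_half _ _ Hfst). pose proof (Rabs_dd_scale_le_half _ _ Hsnd). lra.
Qed.

Lemma dd_poly_large alpha a r : 0 < alpha < 1 -> irrational alpha -> 0 <= r ->
  exists z w, in_bidisk z w /\
    dd_scale a * (r ^ pred (S a * S a) * exp (- INR (2 * a) * r)) / INR (fact (pred (S a * S a)))
      <= Cnorm (peval (2 * a) (dd_poly alpha a (dd_scale a)) z w).
Proof.
  intros Hal Hirr Hr.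
  assert (HL := nodes_NoDup alpha a Hirr).
  assert (Hne := nodes_not_nil alpha a).
  assert (Hlow := exp_dd_lower r _ _ Hr HL Hne (nodes_bounds alpha a ltac:(lra))).
  rewrite nodes_length in Hlow.
  exists (Cexp (- r, 0)), (Cexp (Cscale alpha (- r, 0))). split.
  - split; rewrite Cnorm_Cexp, <- exp_0; apply exp_le; simpl; nra.
  - eapply Rle_trans; [|apply Rabs_fst_le_Cnorm].
    rewrite (peval_dd_poly fst); try (intros; simpl; ring); try reflexivity.
    assert (Hfact := INR_fact_lt_0 (pred (S a * S a))).
    assert (Hs : 0 <= dd_scale a).
    { unfold dd_scale. apply Rlt_le, Rdiv_lt_0_compat; [lra|].
      apply Rmult_lt_0_compat; [apply pow_lt; lra|apply exp_pos]. }
    rewrite Rabs_mult, (Rabs_pos_eq (dd_scale a)) by exact Hs.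
    unfold Rdiv. rewrite Rmult_assoc. apply Rmult_le_compat_l; [exact Hs|].
    apply Rmult_le_reg_l with (INR (fact (pred (S a * S a)))); [exact Hfact|].
    field_simplify; lra.
Qed.

Lemma Esup_upper (S : R -> Prop) E t : Esup S = Some E -> S t -> t <= E.
Proof.
  unfold Esup. destruct (excluded_middle_informative _) as [H|H]; [|discriminate].
  intros HE Ht. injection HE as <-.
  exact (proj1 (proj2_sig (constructive_indefinite_description _ H)) t Ht).
Qed.

Lemma en_ge alpha a r X e : 0 < alpha < 1 -> irrational alpha -> 0 <= r ->
  exp X <= dd_scale a * (r ^ pred (S a * S a) * exp (- INR (2 * a) * r))
             / INR (fact (pred (S a * S a))) ->
  en alpha (2 * a) = Some e -> X <= e.
Proof.
  intros Hal Hirr Hr HX. unfold en. destruct (En alpha (2 * a)) as [E|] eqn:HE; [|discriminate].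
  intros [= <-].
  destruct (dd_poly_large alpha a r Hal Hirr Hr) as [z [w [Hzw Hlarge]]].
  assert (HXE : exp X <= E).
  { eapply Rle_trans; [exact HX|]. eapply Rle_trans; [exact Hlarge|].
    apply (Esup_upper _ _ _ HE). exists (dd_poly alpha a (dd_scale a)).
    split; [apply dd_poly_in_Pn|]. split; [apply dd_poly_bounded_on_K; assumption|].
    exists z, w. split; [exact Hzw|reflexivity]. }
  rewrite <- (ln_exp X). destruct (Rle_lt_or_eq_dec _ _ HXE) as [Hlt|<-]; [|right; reflexivity].
  left. apply ln_increasing; [apply exp_pos|exact Hlt].
Qed.

Lemma pow_exp c k : exp c ^ k = exp (INR k * c).
Proof.
  induction k as [|k IH]; simpl pow.
  - rewrite Rmult_0_l, exp_0. reflexivity.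
  - rewrite IH, S_INR, <- exp_plus. f_equal. ring.
Qed.

(* With [r = 2 e^c] the powers of 2 in [r^m] and in [dd_scale] cancel, leaving [e^(m c)]. *)
Lemma dd_witness_ge_exp a c :
  let m := pred (S a * S a) in let n := INR (2 * a) in
  exp (INR m * c - n * (2 * exp c) - n - 2) <=
  dd_scale a * ((2 * exp c) ^ m * exp (- n * (2 * exp c))) / INR (fact m).
Proof.
  intros m n. unfold dd_scale. fold m n.
  rewrite Rpow_mult_distr, pow_exp.
  replace (INR m * c - n * (2 * exp c) - n - 2)
    with (INR m * c + - n * (2 * exp c) + - n + - 2) by ring.
  rewrite !exp_plus, !exp_Ropp.
  pose proof (INR_fact_lt_0 m). pose proof (pow_lt 2 m ltac:(lra)).
  pose proof (exp_pos (INR m * c)). pose proof (exp_pos (- n * (2 * exp c))). pose proof (exp_pos n).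
  assert (He2 : 4 <= exp 2).
  { replace 2 with (1 + 1) by ring. rewrite exp_plus. pose proof (exp_ineq1 1 ltac:(lra)). nra. }
  replace (INR (fact m) / (2 ^ S (S m) * exp n) * (2 ^ m * exp (INR m * c) * exp (- n * (2 * exp c)))
             / INR (fact m))
    with (exp (INR m * c) * exp (- n * (2 * exp c)) * / exp n * / 4) by (simpl; field; lra).
  apply Rmult_le_compat_l; [apply Rmult_le_pos; [nra|apply Rlt_le, Rinv_0_lt_compat; lra]|].
  replace (exp (-2)) with (/ exp 2) by (rewrite <- exp_Ropp; f_equal; ring).
  apply Rinv_le_contravar; lra.
Qed.

Lemma growth_dominates_square M A c : c = 4 * Rmax M 0 + 4 -> exp c + 1 < A ->
  M * (2 * A) ^ 2 < (A * A + 2 * A) * c - 2 * A * (2 * exp c) - 2 * A - 2.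
Proof.
  intros Hc HA.
  assert (HM : M <= Rmax M 0 /\ 0 <= Rmax M 0) by (split; [apply Rmax_l|apply Rmax_r]).
  assert (Hec : 1 <= exp c) by (rewrite <- exp_0; apply exp_le; lra).
  assert (HMA : M * (A * A) <= Rmax M 0 * (A * A)) by (apply Rmult_le_compat_r; nra).
  assert (HA2 : 4 * A * (exp c + 1) < 4 * A * A) by nra.
  assert (HAc : 0 <= 2 * A * c) by nra.
  assert (Hexpand : (A * A + 2 * A) * c = 4 * (Rmax M 0 * (A * A)) + 4 * A * A + 2 * A * c)
    by (subst c; ring).
  replace (M * (2 * A) ^ 2) with (4 * (M * (A * A))) by ring. lra.
Qed.

Lemma limsup_eps11 alpha : 0 < alpha < 1 -> irrational alpha -> limsup_infty eps11 alpha.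
Proof.
  intros Hal Hirr M N0.
  set (c := 4 * Rmax M 0 + 4).
  destruct (INR_unbounded (exp c + 1)) as [K HK].
  set (j := Nat.max N0 K). set (a := (2 ^ j)%nat). set (n := (2 * a)%nat).
  assert (Hja : (j < a)%nat) by apply Nat.pow_gt_lin_r, Nat.lt_1_2.
  exists n. split; [unfold n, j in *; lia|].
  destruct (en alpha n) as [e|] eqn:He; [|exact I].
  assert (Hpow2 : is_pow2 n) by (exists (S j); unfold n, a; rewrite Nat.pow_succ_r'; reflexivity).
  unfold eps11. destruct (excluded_middle_informative (is_pow2 n)) as [_|Hn]; [|contradiction].
  assert (Hc : 0 <= 2 * exp c) by (pose proof (exp_pos c); lra).
  assert (Hlow := en_ge alpha a _ _ e Hal Hirr Hc (dd_witness_ge_exp a c) He).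
  set (A := INR a) in *.
  assert (HA : exp c + 1 < A).
  { apply Rlt_le_trans with (INR K); [exact HK|]. apply le_INR. unfold j in Hja. lia. }
  assert (Hm : INR (pred (S a * S a)) = A * A + 2 * A).
  { replace (pred (S a * S a)) with (a * a + 2 * a)%nat by lia.
    rewrite plus_INR, !mult_INR. reflexivity. }
  assert (Hn : INR n = 2 * A) by (unfold n; rewrite mult_INR; reflexivity).
  fold n in Hlow. rewrite Hm, Hn in Hlow. rewrite Hn.
  assert (Hgrowth := growth_dominates_square M A c eq_refl HA).
  pose proof (exp_pos c).
  apply Rmult_lt_reg_l with ((2 * A) ^ 2); [nra|].
  field_simplify; [lra|nra].
Qed.

Definition pow2_harmonic (k : nat) : R :=
  if excluded_middle_informative (is_pow2 (S k)) then / INR (S k) else 0.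

Lemma eps11_term_bounds k :
  0 < INR (S k) * eps11 (S k) <= / INR (S k) ^ 2 + pow2_harmonic k.
Proof.
  assert (Hk : 0 < INR (S k)) by apply lt_0_INR, Nat.lt_0_succ.
  unfold eps11, pow2_harmonic. destruct (excluded_middle_informative (is_pow2 (S k))).
  - replace (INR (S k) * / INR (S k) ^ 2) with (/ INR (S k)) by (field; lra).
    pose proof (Rinv_0_lt_compat _ (pow_lt _ 2 Hk)). pose proof (Rinv_0_lt_compat _ Hk). lra.
  - replace (INR (S k) * / INR (S k) ^ 3) with (/ INR (S k) ^ 2) by (field; lra).
    pose proof (Rinv_0_lt_compat _ (pow_lt _ 2 Hk)). lra.
Qed.

Lemma sum_inv_sq_le N : sum_f_R0 (fun k => / INR (S k) ^ 2) N <= 2 - / INR (S N).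
Proof.
  induction N as [|N IH]; [simpl; lra|].
  rewrite tech5. assert (HN : 0 < INR (S N)) by apply lt_0_INR, Nat.lt_0_succ.
  rewrite (S_INR (S N)).
  assert (/ (INR (S N) + 1) ^ 2 <= / INR (S N) - / (INR (S N) + 1)).
  { apply Rle_trans with (/ (INR (S N) * (INR (S N) + 1))).
    - apply Rinv_le_contravar; nra.
    - right. field. lra. }
  lra.
Qed.

Lemma sum_pow2_harmonic_le N k : (S N < 2 ^ k)%nat -> sum_f_R0 pow2_harmonic N <= 2 - 2 / 2 ^ k.
Proof.
  revert k. induction N as [|N IH]; intros k Hk.
  - simpl. unfold pow2_harmonic.
    destruct (excluded_middle_informative (is_pow2 1)) as [_|Hn]; [|exfalso; apply Hn; exists 0%nat; reflexivity].
    destruct k as [|k]; [simpl in Hk; lia|].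
    assert (1 <= 2 ^ k) by (apply pow_R1_Rle; lra).
    assert (/ 2 ^ k <= 1) by (rewrite <- Rinv_1; apply Rinv_le_contravar; lra).
    replace (2 / 2 ^ S k) with (/ 2 ^ k) by (simpl; field; lra). simpl. lra.
  - rewrite tech5. unfold pow2_harmonic at 2.
    destruct (excluded_middle_informative (is_pow2 (S (S N)))) as [[j Hj]|Hn].
    + assert (Hjk : (j < k)%nat) by (apply (Nat.pow_lt_mono_r_iff 2); lia).
      assert (HIH := IH j ltac:(lia)).
      rewrite Hj, pow_INR. replace (INR 2) with 2 by (simpl; ring).
      assert (0 < 2 ^ j) by (apply pow_lt; lra).
      assert (2 * 2 ^ j <= 2 ^ k) by (change (2 * 2 ^ j) with (2 ^ S j); apply Rle_pow; [lra|lia]).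
      assert (2 / 2 ^ k <= / 2 ^ j).
      { apply Rle_trans with (2 / (2 * 2 ^ j)).
        - apply Rmult_le_compat_l; [lra|]. apply Rinv_le_contravar; lra.
        - right. field. lra. }
      unfold Rdiv in HIH. lra.
    + pose proof (IH k ltac:(lia)). lra.
Qed.

Lemma summable_eps11 :
  exists l : R, Un_cv (fun N => sum_f_R0 (fun k => INR (S k) * eps11 (S k)) N) l.
Proof.
  destruct (growing_cv (fun N => sum_f_R0 (fun k => INR (S k) * eps11 (S k)) N)) as [l Hl].
  - intros N. rewrite tech5. pose proof (eps11_term_bounds (S N)). lra.
  - exists 4. intros x [N ->].
    apply Rle_trans with (sum_f_R0 (fun k => / INR (S k) ^ 2 + pow2_harmonic k) N).
    + apply sum_Rle. intros k _. apply eps11_term_bounds.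
    + rewrite plus_sum.
      assert (HN : (S N < 2 ^ S N)%nat) by apply Nat.pow_gt_lin_r, Nat.lt_1_2.
      pose proof (sum_inv_sq_le N). pose proof (sum_pow2_harmonic_le N (S N) HN).
      pose proof (Rinv_0_lt_compat _ (lt_0_INR _ (Nat.lt_0_succ N))).
      assert (0 <= 2 / 2 ^ S N) by (apply Rlt_le, Rdiv_lt_0_compat; [lra|apply pow_lt; lra]).
      lra.
  - exists l. exact Hl.
Qed.

Theorem mainTheorem11 :
  (exists l : R, Un_cv (fun N => sum_f_R0 (fun k => INR (S k) * eps11 (S k)) N) l) /\
  (forall alpha : R, U eps11 alpha <-> (0 < alpha < 1 /\ irrational alpha)).
Proof.
  split; [exact summable_eps11|].
  intros alpha. unfold U. split.
  - intros [Hal [Hirr _]]. split; assumption.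
  - intros [Hal Hirr]. split; [exact Hal|]. split; [exact Hirr|]. exact (limsup_eps11 alpha Hal Hirr).
Qed.
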